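(* Let $R$ be a commutative Noetherian ring, $I\subseteq R$ an ideal, and $(F_\bullet,d_\bullet)$ a free resolution of $R/I$ with $F_0=R$. Assume that for each $i\ge0$ there is an $R$-bilinear product $\cdot:F_1\otimes_R F_i\to F_{i+1}$ satisfying, for all $f_1\in F_1$, $f_i\in F_i$: (a) $d_{i+1}(f_1\cdot f_i)=d_1(f_1)f_i-f_1\cdot d_i(f_i)$, and (b) $f_1\cdot(f_1\cdot f_i)=0$. Then for any ideal $\mathfrak{a}\subseteq I$ generated by a regular sequence, $F_\bullet$ is a DG-module over the Koszul complex $K_\bullet$ resolving $R/\mathfrak{a}$.
   Context: A DG $K_\bullet$-module structure on $F_\bullet$ is a unital, associative action $K_p\otimes_R F_q\to F_{p+q}$ of the Koszul complex (viewed as the exterior algebra DG-algebra) satisfying $d(x\cdot f)=d(x)\cdot f+(-1)^{|x|}x\cdot d(f)$. *)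

From HB Require Import structures.
From mathcomp Require Import all_boot all_order all_algebra.
Set Implicit Arguments. Unset Strict Implicit. Unset Printing Implicit Defensive.
Import Order.TTheory GRing.Theory Num.Theory.
Local Open Scope ring_scope.

Section Ideals.
Variable R : comPzRingType.

Definition is_ideal (I : R -> Prop) : Prop :=
  [/\ I 0, (forall a b, I a -> I b -> I (a + b)) & (forall r a, I a -> I (r * a))].

Definition ideal_gen_prefix (n : nat) (x : 'I_n -> R) (k : nat) (r : R) : Prop :=
  exists c : 'I_n -> R, r = \sum_(i < n | (i < k)%N) c i * x i.

Definition ideal_gen (n : nat) (x : 'I_n -> R) (r : R) : Prop :=
  ideal_gen_prefix x n r.

Definition noetherian : Prop :=
  forall J : R -> Prop, is_ideal J ->
    exists (m : nat) (g : 'I_m -> R), forall r, J r <-> ideal_gen g r.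

Definition regular_sequence (n : nat) (x : 'I_n -> R) : Prop :=
  (forall (k : 'I_n) (r : R),
      ideal_gen_prefix x k (x k * r) -> ideal_gen_prefix x k r)
  /\ ~ ideal_gen x 1.
End Ideals.

Section Modules.
Variable R : comPzRingType.

Definition free_module (M : lmodType R) : Prop :=
  exists (B : eqType) (b : B -> M),
    (forall v : M, exists (s : seq B) (c : B -> R), v = \sum_(k <- s) c k *: b k)
    /\ (forall (s : seq B) (c : B -> R), uniq s ->
          \sum_(k <- s) c k *: b k = 0 -> forall k, k \in s -> c k = 0).

Definition is_linear (M N : lmodType R) (f : M -> N) : Prop :=
  forall (a : R) (u v : M), f (a *: u + v) = a *: f u + f v.

Definition is_bilinear (M N P : lmodType R) (m : M -> N -> P) : Prop :=
  (forall u, is_linear (m u)) /\ (forall v, is_linear (fun u => m u v)).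

Definition castF (F : nat -> lmodType R) (m n : nat) (e : m = n) (v : F m) : F n :=
  eq_rect m (fun k => F k : Type) v n e.
End Modules.

(* A complex is given by modules F i and maps d i : F_(i+1) -> F_i
   (d i is the paper's d_(i+1)); phi0 identifies F_0 with R. *)
Definition free_resolution_of_quotient (R : comPzRingType) (I : R -> Prop)
    (F : nat -> lmodType R) (d : forall i, F i.+1 -> F i) (phi0 : F 0%N -> R) : Prop :=
  [/\ (forall i, free_module (F i)),
      (forall i, is_linear (d i)),
      (is_linear (phi0 : F 0%N -> R^o) /\ bijective phi0),
      ((forall i (v : F i.+2), d i (d i.+1 v) = 0) /\
       (forall i (v : F i.+1), d i v = 0 -> exists w : F i.+2, d i.+1 w = v))
    & (* H_0 = R / I, i.e. image of d_1 in F_0 = R is I *)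
      (forall r : R, I r <-> exists w : F 1%N, phi0 (d 0%N w) = r)].

(* K = exterior algebra on e_0,...,e_(n-1), with R-basis e_S, S subset of 'I_n,
   e_S = e_(s1) /\ ... /\ e_(sp) for s1 < ... < sp.  K_p = span of e_S, |S| = p. *)
Section Koszul.
Variable R : comPzRingType.
Variable n : nat.
Variable x : 'I_n -> R.

Definition koszul : lmodType R := {ffun {set 'I_n} -> R^o}.

Definition kz_homogeneous (p : nat) (a : koszul) : Prop :=
  forall S : {set 'I_n}, #|S| != p -> a S = 0.

Definition kz_one : koszul := [ffun S => (S == set0)%:R].

(* e_S /\ e_T = (-1)^#{(s,t) in S x T | t < s} e_(S u T) if S, T disjoint, 0 else *)
Definition kz_sign (S T : {set 'I_n}) : R :=
  (-1) ^+ #|[set st : 'I_n * 'I_n | (st.1 \in S) && (st.2 \in T) && (st.2 < st.1)%N]|.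

Definition kz_wedge (a b : koszul) : koszul :=
  [ffun U : {set 'I_n} => \sum_(S : {set 'I_n}) \sum_(T : {set 'I_n})
      (if (S :|: T == U) && [disjoint S & T] then kz_sign S T * a S * b T else 0)].

(* d(e_S) = sum_(k in S) (-1)^#{s in S | s < k} x_k e_(S \ k) *)
Definition kz_d (a : koszul) : koszul :=
  [ffun U : {set 'I_n} => \sum_(k : 'I_n | k \notin U)
      (-1) ^+ #|[set s in U | (s < k)%N]| * x k * a (k |: U)].
End Koszul.

(* act p q a f = a . f for a in K_p, f in F_q, landing in F_(p+q).
   The Leibniz rule d(a.f) = d(a).f + (-1)^p a.d(f) is split according to
   whether p and q are zero (d vanishes on K_0 and on F_0). *)
Definition DG_koszul_module (R : comPzRingType) (n : nat) (x : 'I_n -> R)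
    (F : nat -> lmodType R) (d : forall i, F i.+1 -> F i)
    (act : forall p q, koszul R n -> F q -> F (p + q)%N) : Prop :=
  [/\
      (forall p q, is_bilinear (act p q)) /\
      (forall q (f : F q), act 0%N q (kz_one R n) f = f),
      (forall p p' q (a b : koszul R n) (f : F q),
          kz_homogeneous p a -> kz_homogeneous p' b ->
          act p (p' + q)%N a (act p' q b f)
          = castF (esym (addnA p p' q)) (act (p + p')%N q (kz_wedge a b) f)),
      (forall j (a : koszul R n) (f : F j.+1), kz_homogeneous 0 a ->
          d j (act 0%N j.+1 a f) = act 0%N j a (d j f)),
      (forall i (a : koszul R n) (f : F 0%N), kz_homogeneous i.+1 a ->
          d (i + 0)%N (act i.+1 0%N a f) = act i 0%N (kz_d x a) f)
    &
      (forall i j (a : koszul R n) (f : F j.+1), kz_homogeneous i.+1 a ->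
          d (i + j.+1)%N (act i.+1 j.+1 a f)
          = act i j.+1 (kz_d x a) f
            + (-1) ^+ i.+1 *: castF (esym (addnS i j)) (act i.+1 j a (d j f)))].

From HB Require Import structures.
From mathcomp Require Import all_boot all_order all_algebra.
Set Implicit Arguments. Unset Strict Implicit. Unset Printing Implicit Defensive.
Import GRing.Theory.
Local Open Scope ring_scope.

(* Since a is contained in I = d_1(F_1), each generator x_k of a lifts to some
   w_k in F_1 with d_1(w_k) = x_k.  Let the basis element e_{s_1} /\ ... /\ e_{s_p}
   of K (s_1 < ... < s_p) act on F by f |-> w_{s_1}.(w_{s_2}.( ... (w_{s_p}.f))).
   Polarizing (b) gives w_k.(w_l.f) = - w_l.(w_k.f) and w_k.(w_k.f) = 0, the defining
   relations of the exterior algebra, so left multiplication by e_k corresponds to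
   w_k.- and the action is associative.  Condition (a) is the Leibniz rule for a
   single generator, and induction on the Koszul degree extends it to all of K. *)

Section OrdinalSets.
Variable n : nat.
Implicit Types (k l : 'I_n) (S T U : {set 'I_n}).

Definition below l T : bool := [forall t in T, (l < t)%N].

Lemma belowP l T : reflect (forall t, t \in T -> (l < t)%N) (below l T).
Proof. exact: forall_inP. Qed.

Lemma below_notin l T : below l T -> l \notin T.
Proof. by move=> /belowP lT; apply/negP => /lT; rewrite ltnn. Qed.

Lemma below0 l : below l set0.
Proof. by apply/belowP => t; rewrite inE. Qed.

Lemma belowU1 l k T : below l (k |: T) = (l < k)%N && below l T.
Proof.
apply/belowP/andP => [lkT|[lk /belowP lT] t].
  split; first by apply: lkT; rewrite setU11.
  by apply/belowP => t tT; apply: lkT; rewrite !inE tT orbT.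
by rewrite !inE => /orP [/eqP ->|/lT].
Qed.

Lemma card_lt_eq0 k T : (forall t, t \in T -> (k <= t)%N) ->
  #|[set s in T | (s < k)%N]| = 0%N.
Proof.
move=> kT; apply/eqP; rewrite cards_eq0; apply/eqP/setP => s; rewrite !inE.
by apply/negP => /andP [/kT ks sk]; move: (leq_trans sk ks); rewrite ltnn.
Qed.

Lemma card_lt_setU1 l k T : l \notin T ->
  #|[set s in l |: T | (s < k)%N]| = ((l < k)%N + #|[set s in T | (s < k)%N]|)%N.
Proof.
move=> lT; case: (ltnP l k) => lk.
  have -> : [set s in l |: T | (s < k)%N] = l |: [set s in T | (s < k)%N].
    by apply/setP => s; rewrite !inE; case: (eqVneq s l) => [->|].
  by rewrite cardsU1 inE (negbTE lT).
rewrite add0n; apply: eq_card => s; rewrite !inE.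
by case: (eqVneq s l) => [->|] //=; rewrite (negbTE lT) ltnNge lk.
Qed.

Lemma card_lt_setU k S T : [disjoint S & T] ->
  #|[set s in S :|: T | (s < k)%N]| =
  (#|[set s in S | (s < k)%N]| + #|[set s in T | (s < k)%N]|)%N.
Proof.
move=> dST; have -> : [set s in S :|: T | (s < k)%N] =
    [set s in S | (s < k)%N] :|: [set s in T | (s < k)%N].
  by apply/setP => s; rewrite !inE andb_orl.
rewrite cardsU; have -> : [set s in S | (s < k)%N] :&: [set s in T | (s < k)%N] = set0.
  apply/setP => s; rewrite !inE; apply/negP => /andP [/andP [sS _] /andP [sT _]].
  by move: (disjointFr dST sS); rewrite sT.
by rewrite cards0 subn0.
Qed.

Lemma disjoint_setU1l l S T : l \notin T ->
  [disjoint l |: S & T] = [disjoint S & T].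
Proof.
move=> lT; rewrite -!setI_eq0 setIUl; have -> : [set l] :&: T = set0.
  by apply/setP => s; rewrite !inE; case: eqVneq => // ->; rewrite (negbTE lT).
by rewrite set0U.
Qed.

End OrdinalSets.

Section KoszulAlgebra.
Variable R : comPzRingType.
Variable n : nat.
Local Notation K := (koszul R n).
Implicit Types (k l : 'I_n) (S T U : {set 'I_n}) (a b c : K).

(* kz_ewedge l a is e_l /\ a, and kz_tail l a is the part of a of least index l with
   e_l stripped off, so that a = \sum_l e_l /\ kz_tail l a when a(set0) = 0. *)
Definition kz_tail l a : K :=
  [ffun T : {set 'I_n} => if below l T then a (l |: T) else 0].

Definition kz_ewedge l a : K :=
  [ffun U : {set 'I_n} =>
     if l \in U then (-1) ^+ #|[set s in U | (s < l)%N]| * a (U :\ l) else 0].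

Definition kz_above k a : K := [ffun T : {set 'I_n} => if below k T then a T else 0].

Lemma kz_tailE l a T : kz_tail l a T = if below l T then a (l |: T) else 0.
Proof. by rewrite ffunE. Qed.

Lemma kz_ewedgeE l a U : kz_ewedge l a U =
  if l \in U then (-1) ^+ #|[set s in U | (s < l)%N]| * a (U :\ l) else 0.
Proof. by rewrite ffunE. Qed.

Lemma kz_tail_set0 l a : kz_tail l a set0 = a [set l].
Proof. by rewrite kz_tailE below0 setU0. Qed.

Lemma kz_tail_linear l r a b : kz_tail l (r *: a + b) = r *: kz_tail l a + kz_tail l b.
Proof.
by apply/ffunP => T; rewrite !ffunE; case: ifP => _; rewrite ?ffunE ?scaler0 ?addr0.
Qed.

Lemma kz_homogeneous_set0 p a : kz_homogeneous p.+1 a -> a set0 = 0.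
Proof. by apply; rewrite cards0. Qed.

Lemma kz_homogeneous_tail p l a :
  kz_homogeneous p.+1 a -> kz_homogeneous p (kz_tail l a).
Proof.
move=> ha T cardT; rewrite kz_tailE; case: ifP => // lT.
by apply: ha; rewrite cardsU1 below_notin.
Qed.

Lemma kz_tail_ewedge_id k a : kz_tail k (kz_ewedge k a) = kz_above k a.
Proof.
apply/ffunP => T; rewrite !ffunE; case: ifP => // kT.
rewrite setU11 setU1K ?below_notin // card_lt_setU1 ?below_notin // ltnn add0n.
by rewrite card_lt_eq0 ?expr0 ?mul1r // => t /(belowP _ _ kT) /ltnW.
Qed.

Lemma kz_tail_ewedge_lt l k a :
  (l < k)%N -> kz_tail l (kz_ewedge k a) = - kz_ewedge k (kz_tail l a).
Proof.
move=> lk; apply/ffunP => T; rewrite !ffunE.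
have kl : k != l by rewrite neq_ltn lk orbT.
have belowD1 : below l (T :\ k) = below l T.
  apply/belowP/belowP => lT t; last by rewrite inE => /andP [_ /lT].
  by case: (eqVneq t k) => [->//|tk tT]; apply: lT; rewrite !inE tk.
case: ifP => lT; last by case: ifP => _; rewrite ?belowD1 ?lT ?mulr0 oppr0.
rewrite !inE (negbTE kl) /=; case: ifP => kT; last by rewrite oppr0.
rewrite belowD1 lT card_lt_setU1 ?below_notin // lk add1n exprS mulN1r mulNr.
congr (- (_ * a _)); apply/setP => s; rewrite !inE.
by case: (eqVneq s l) => // ->; rewrite eq_sym kl.
Qed.

Lemma kz_tail_ewedge_gt l k a : (k < l)%N -> kz_tail l (kz_ewedge k a) = 0.
Proof.
move=> kl; apply/ffunP => T; rewrite !ffunE; case: ifP => // lT.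
have kl' : k != l by rewrite neq_ltn kl.
rewrite !inE (negbTE kl') /=; case: ifP => // /(belowP _ _ lT) lk.
by move: (ltn_trans lk kl); rewrite ltnn.
Qed.

Lemma kz_tail_above l k a :
  kz_tail l (kz_above k a) = if (k < l)%N then kz_tail l a else 0.
Proof.
apply/ffunP => T; case: ifP => kl; rewrite !ffunE; case: ifP => // lT; rewrite ?ffunE.
  rewrite belowU1 kl ifT //.
  by apply/belowP => t /(belowP _ _ lT); apply: ltn_trans.
by rewrite belowU1 kl.
Qed.

Lemma kz_ewedge_tail_sum a : a set0 = 0 -> a = \sum_l kz_ewedge l (kz_tail l a).
Proof.
move=> a0; apply/ffunP => U; rewrite sum_ffunE.
have [->|[i0 i0U]] := set_0Vmem U.
  by rewrite a0 big1 // => l _; rewrite ffunE inE.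
have [l lU lmin] : exists2 l, l \in U & forall j, j \in U -> (l <= j)%N.
  by case: (arg_minnP (fun i : 'I_n => nat_of_ord i) i0U) => l; exists l.
rewrite (bigD1 l) //= big1 ?addr0.
  rewrite !ffunE lU card_lt_eq0 // expr0 mul1r.
  suff -> : below l (U :\ l) by rewrite setD1K.
  apply/belowP => t; rewrite !inE => /andP [tl tU].
  by rewrite ltn_neqAle lmin // andbT; apply: contra tl => /eqP/val_inj ->.
move=> k kl; rewrite !ffunE; case: ifP => // kU.
case: ifP => [/belowP kUl|]; last by rewrite mulr0.
have : l \in U :\ k by rewrite !inE eq_sym kl.
by move=> /kUl; rewrite ltnNge lmin.
Qed.


Lemma kz_signU1l l S T : l \notin S ->
  kz_sign R (l |: S) T = (-1) ^+ #|[set t in T | (t < l)%N]| * kz_sign R S T.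
Proof.
move=> lS; rewrite /kz_sign -exprD; congr (_ ^+ _).
set P := [set st : 'I_n * 'I_n | (st.1 \in S) && (st.2 \in T) && (st.2 < st.1)%N].
have -> : [set st : 'I_n * 'I_n | (st.1 \in l |: S) && (st.2 \in T) && (st.2 < st.1)%N]
    = [set (l, t) | t in [set t in T | (t < l)%N]] :|: P.
  apply/setP => [[s t]]; rewrite !inE /=; apply/idP/idP.
    case/andP => /andP [/orP [/eqP -> | sS] tT] ts; last by rewrite sS tT ts orbT.
    by apply/orP; left; apply/imsetP; exists t; rewrite // inE tT.
  case/orP; last by case/andP => /andP [-> ->] ->; rewrite orbT.
  by case/imsetP => t'; rewrite inE => /andP [t'T t'l] [-> ->]; rewrite eqxx t'T t'l.
rewrite cardsU card_imset; last by move=> t1 t2 [].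
suff -> : [set (l, t) | t in [set t in T | (t < l)%N]] :&: P = set0 by rewrite cards0 subn0.
apply/setP => [[s t]]; rewrite !inE /=; apply/negP => /andP [/imsetP [t' _ [-> _]]].
by rewrite (negbTE lS).
Qed.

Lemma kz_wedgeDl a1 a2 b : kz_wedge (a1 + a2) b = kz_wedge a1 b + kz_wedge a2 b.
Proof.
apply/ffunP => U; rewrite !ffunE -big_split; apply: eq_bigr => S _.
rewrite -big_split; apply: eq_bigr => T _.
by case: ifP => _; [rewrite ffunE mulrDr mulrDl | exact: esym (addr0 0)].
Qed.

Lemma kz_wedge0l b : kz_wedge 0 b = 0.
Proof.
apply/ffunP => U; rewrite !ffunE big1 // => S _; rewrite big1 // => T _.
by rewrite ffunE mulr0 mul0r if_same.
Qed.

Lemma kz_wedge_suml (I : finType) (G : I -> K) b :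
  kz_wedge (\sum_i G i) b = \sum_i kz_wedge (G i) b.
Proof.
exact: (big_morph (fun a => kz_wedge a b) (fun a1 a2 => kz_wedgeDl a1 a2 b) (kz_wedge0l b)).
Qed.

Lemma kz_wedge_deg0 a b : kz_homogeneous 0 a -> kz_wedge a b = a set0 *: b.
Proof.
move=> a0; apply/ffunP => U; rewrite !ffunE (bigD1 set0) //= [X in _ + X]big1; last first.
  by move=> S S0; rewrite big1 // => T _; rewrite a0 ?cards_eq0 // mulr0 mul0r if_same.
rewrite addr0 (bigD1 U) //= [X in _ + X]big1; last first.
  by move=> T TU; rewrite set0U (negbTE TU).
rewrite set0U eqxx -setI_eq0 set0I eqxx /kz_sign.
suff -> : [set st : 'I_n * 'I_n | (st.1 \in set0) && (st.2 \in U) && (st.2 < st.1)%N] = set0.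
  by rewrite addr0 cards0 expr0 mul1r.
by apply/setP => st; rewrite !inE.
Qed.

Lemma kz_wedge_ewedge_term l U S T c b : l \in U -> l \notin S ->
  (if ((l |: S) :|: T == U) && [disjoint l |: S & T]
   then kz_sign R (l |: S) T * kz_ewedge l c (l |: S) * b T else 0)
  = (-1) ^+ #|[set s in U | (s < l)%N]|
    * (if (S :|: T == U :\ l) && [disjoint S & T] then kz_sign R S T * c S * b T else 0).
Proof.
move=> lU lS; have [lT|lT] := boolP (l \in T).
  have -> : [disjoint l |: S & T] = false.
    by apply/negbTE/negP => /disjointFr /(_ (setU11 l S)); rewrite lT.
  have -> : (S :|: T == U :\ l) = false.
    by apply/negbTE/negP => /eqP /setP /(_ l); rewrite !inE eqxx lT orbT.
  by rewrite andbF mulr0.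
have -> : ((l |: S) :|: T == U) = (S :|: T == U :\ l).
  apply/eqP/eqP => [<-|STU]; last by rewrite -(setD1K lU) -STU setUA.
  apply/setP => s; rewrite !inE.
  by case: (eqVneq s l) => //= ->; rewrite (negbTE lS) (negbTE lT).
rewrite disjoint_setU1l //; case: ifP => [/andP [/eqP STU dST] | _]; last by rewrite mulr0.
have lST : l \notin S :|: T by rewrite inE negb_or lS lT.
rewrite -(setD1K lU) -STU kz_ewedgeE setU11 setU1K // kz_signU1l //.
rewrite !card_lt_setU1 // ltnn !add0n card_lt_setU // exprD.
by rewrite mulrCA !mulrA.
Qed.

Lemma kz_wedge_ewedgel l c b : kz_wedge (kz_ewedge l c) b = kz_ewedge l (kz_wedge c b).
Proof.
apply/ffunP => U; rewrite [RHS]ffunE ffunE.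
rewrite (bigID (fun S : {set 'I_n} => l \in S)) /= [X in _ + X]big1 ?addr0; last first.
  move=> S lS; apply: big1 => T _.
  by rewrite kz_ewedgeE (negbTE lS) mulr0 mul0r if_same.
rewrite (reindex_onto (fun S => l |: S) (fun S => S :\ l)) /=; last first.
  by move=> S lS; rewrite setD1K.
have [lU|lU] := boolP (l \in U); last first.
  rewrite big1 // => S _; apply: big1 => T _.
  by case: ifP => // /andP [/eqP STU _]; move: lU; rewrite -STU !inE eqxx.
rewrite ffunE mulr_sumr [RHS](bigID (fun S : {set 'I_n} => l \in S)) /=.
rewrite [X in _ = X + _]big1 ?add0r; last first.
  move=> S lS; rewrite mulr_sumr big1 // => T _.
  case: ifP; last by rewrite mulr0.
  by case/andP => /eqP /setP /(_ l); rewrite !inE eqxx lS.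
have setU1K_eq S : (l \in l |: S) && ((l |: S) :\ l == S) = (l \notin S).
  rewrite setU11 /=; apply/eqP/idP => [<-|]; last exact: setU1K.
  by rewrite !inE eqxx.
rewrite (eq_bigl _ _ setU1K_eq); apply: eq_bigr => S lS.
rewrite mulr_sumr; apply: eq_bigr => T _; exact: kz_wedge_ewedge_term.
Qed.

Lemma kz_tail_d (x : 'I_n -> R) m a :
  kz_tail m (kz_d x a) = \sum_l x l *: kz_tail m (kz_tail l a) - kz_d x (kz_tail m a).
Proof.
apply/ffunP => T; rewrite kz_tailE !ffunE sum_ffunE.
have [mT|mT] := boolP (below m T); last first.
  rewrite big1 => [|l _]; last by rewrite !ffunE (negbTE mT) scaler0.
  by rewrite big1 ?subrr // => k _; rewrite kz_tailE belowU1 (negbTE mT) andbF mulr0.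
have mTn := below_notin mT.
rewrite big_mkcond [X in _ = _ - X]big_mkcond -sumrB; apply: eq_bigr => k _.
rewrite !ffunE !belowU1 mT andbT !inE.
case: (ltngtP k m) => km.
- have /negbTE -> : k != m by apply: contraTneq km => ->; rewrite ltnn.
  have kT' : below k T by apply/belowP => t /(belowP _ _ mT); apply: ltn_trans.
  rewrite (negbTE (below_notin kT')) kT' /= card_lt_setU1 //.
  rewrite ltnNge (ltnW km) add0n card_lt_eq0 => [|t /(belowP _ _ kT') /ltnW //].
  by rewrite expr0 mul1r mulr0 subr0.
- have /negbTE -> : k != m by apply: contraTneq km => ->; rewrite ltnn.
  rewrite /= scaler0 sub0r.
  have [kT|kT] := boolP (k \in T); first by rewrite oppr0.
  by rewrite card_lt_setU1 // km add1n exprS mulN1r !mulNr setUCA.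
- by move/val_inj: km => ->; rewrite eqxx /= scaler0 mulr0 if_same subr0.
Qed.

Lemma kz_d_set0 (x : 'I_n -> R) a : kz_d x a set0 = \sum_l x l * a [set l].
Proof.
rewrite ffunE; under eq_bigl do rewrite inE.
apply: eq_bigr => l _; rewrite setU0 card_lt_eq0 => [|t]; last by rewrite inE.
by rewrite expr0 mul1r.
Qed.

End KoszulAlgebra.

Section LinearMaps.
Variables (R : comPzRingType) (M N : lmodType R) (f : M -> N).
Hypothesis f_lin : is_linear f.

Lemma is_linearD u v : f (u + v) = f u + f v.
Proof. by have := f_lin 1 u v; rewrite !scale1r. Qed.

Lemma is_linear0 : f 0 = 0.
Proof. by apply: (addrI (f 0)); rewrite -is_linearD !addr0. Qed.

Lemma is_linearZ r u : f (r *: u) = r *: f u.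
Proof. by have := f_lin r u 0; rewrite !addr0 is_linear0 addr0. Qed.

Lemma is_linearN u : f (- u) = - f u.
Proof. by rewrite -scaleN1r is_linearZ scaleN1r. Qed.

Lemma is_linearB u v : f (u - v) = f u - f v.
Proof. by rewrite is_linearD is_linearN. Qed.

Lemma is_linear_sum (I : Type) (r : seq I) (P : pred I) (G : I -> M) :
  f (\sum_(i <- r | P i) G i) = \sum_(i <- r | P i) f (G i).
Proof. exact: (big_morph f is_linearD is_linear0). Qed.

End LinearMaps.

Section GradedCast.
Variables (R : comPzRingType) (F : nat -> lmodType R).

Lemma castF_id m (e : m = m) (v : F m) : castF e v = v.
Proof. by rewrite (eq_irrelevance e erefl). Qed.

Lemma castF_sum m m' (e : m = m') (I : Type) (r : seq I) (P : pred I) (G : I -> F m) :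
  castF e (\sum_(i <- r | P i) G i) = \sum_(i <- r | P i) castF e (G i).
Proof. by case: m' / e. Qed.

Lemma castF_natural (g : forall m, F m -> F m.+1) m m' (e : m = m') (e' : m.+1 = m'.+1)
    (v : F m) :
  castF e' (g m v) = g m' (castF e v).
Proof. by case: m' / e e' => e'; rewrite castF_id. Qed.

End GradedCast.

Section KoszulAction.
Unset Implicit Arguments.
Variables (R : comPzRingType) (F : nat -> lmodType R).
Variable mu : forall i, F 1%N -> F i -> F i.+1.
Hypothesis mu_bilinear : forall i, is_bilinear (mu i).
Hypothesis mu_nilpotent : forall i u (f : F i), mu i.+1 u (mu i u f) = 0.
Variables (n : nat) (w : 'I_n -> F 1%N).
Local Notation K := (koszul R n).
Implicit Types (k l : 'I_n) (a b : K).

Fixpoint kz_act p q : K -> F q -> F (p + q)%N :=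
  match p return K -> F q -> F (p + q)%N with
  | 0 => fun a f => a set0 *: f
  | p'.+1 => fun a f => \sum_l mu (p' + q) (w l) (kz_act p' q (kz_tail l a) f)
  end.

Lemma kz_actS p q a (f : F q) :
  kz_act p.+1 q a f = \sum_l mu (p + q) (w l) (kz_act p q (kz_tail l a) f).
Proof. by []. Qed.

Lemma mu_linear_r i u : is_linear (mu i u).
Proof. exact: (mu_bilinear i).1. Qed.

Lemma mu_linear_l i (f : F i) : is_linear (fun u => mu i u f).
Proof. exact: (mu_bilinear i).2. Qed.

Lemma mu_anticomm i u v (f : F i) : mu i.+1 u (mu i v f) = - mu i.+1 v (mu i u f).
Proof.
have := mu_nilpotent i (u + v) f.
rewrite (is_linearD (mu_linear_l i f) u v) (is_linearD (mu_linear_l i.+1 _) u v).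
rewrite !(is_linearD (mu_linear_r i.+1 _)) !mu_nilpotent add0r addr0.
by move/eqP; rewrite addr_eq0 => /eqP.
Qed.

Lemma kz_act_linear_l p q (f : F q) : is_linear (fun a => kz_act p q a f).
Proof.
elim: p q f => [|p IH] q f r a b /=; first by rewrite !ffunE scalerDl scalerA.
rewrite scaler_sumr -big_split; apply: eq_bigr => l _.
by rewrite kz_tail_linear IH (mu_linear_r _ _).
Qed.

Lemma kz_act_linear_r p q a : is_linear (kz_act p q a).
Proof.
elim: p q a => [|p IH] q a r u v /=; first by rewrite scalerDr !scalerA mulrC.
rewrite scaler_sumr -big_split; apply: eq_bigr => l _.
by rewrite IH (mu_linear_r _ _).
Qed.

Lemma kz_act0l p q (f : F q) : kz_act p q 0 f = 0.
Proof. exact: (is_linear0 (kz_act_linear_l p q f)). Qed.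

Lemma kz_act_above p q k a (f : F q) :
  kz_act p.+1 q (kz_above k a) f
  = \sum_(l : 'I_n | (k < l)%N) mu (p + q) (w l) (kz_act p q (kz_tail l a) f).
Proof.
rewrite /= [RHS]big_mkcond; apply: eq_bigr => l _; rewrite kz_tail_above.
by case: ifP => // _; rewrite kz_act0l (is_linear0 (mu_linear_r _ _)).
Qed.

Lemma kz_act_ewedge p q k a (f : F q) :
  kz_act p.+1 q (kz_ewedge k a) f = mu (p + q) (w k) (kz_act p q a f).
Proof.
elim: p k a => [|p IH] k a.
  rewrite /= (bigD1 k) //= big1 ?addr0 => [|l lk].
    rewrite kz_tail_set0 kz_ewedgeE set11 setDv card_lt_eq0 => [|t /set1P -> //].
    by rewrite expr0 mul1r.
  rewrite kz_tail_set0 kz_ewedgeE inE eq_sym (negbTE lk) scale0r.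
  exact: (is_linear0 (mu_linear_r _ _)).
set Y := fun l => kz_act p q (kz_tail l a) f.
set Z := fun l => mu (p + q).+1 (w k) (mu (p + q) (w l) (Y l)).
have term l : mu (p.+1 + q) (w l) (kz_act p.+1 q (kz_tail l (kz_ewedge k a)) f)
    = (if (l < k)%N then Z l else 0) + (if l == k then \sum_(m : 'I_n | (k < m)%N) Z m else 0).
  case: (ltngtP l k) => lk.
  - have /negbTE -> : l != k by apply: contraTneq lk => ->; rewrite ltnn.
    rewrite kz_tail_ewedge_lt // (is_linearN (kz_act_linear_l _ _ _)) IH.
    by rewrite (is_linearN (mu_linear_r _ _)) mu_anticomm opprK addr0.
  - have /negbTE -> : l != k by apply: contraTneq lk => ->; rewrite ltnn.
    by rewrite kz_tail_ewedge_gt // kz_act0l (is_linear0 (mu_linear_r _ _)) addr0.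
  - move/val_inj: lk => ->; rewrite eqxx add0r kz_tail_ewedge_id kz_act_above.
    exact: (is_linear_sum (mu_linear_r _ _)).
rewrite [LHS]/= (eq_bigr _ (fun l _ => term l)) big_split /= -!big_mkcond big_pred1_eq.
rewrite [RHS]/= (is_linear_sum (mu_linear_r _ _)) [RHS](bigID (fun l => (l < k)%N)) /=.
congr (_ + _); rewrite [RHS](bigD1 k) ?ltnn //= mu_nilpotent add0r.
by apply: eq_bigl => l; rewrite -leqNgt ltn_neqAle andbC eq_sym.
Qed.

Lemma kz_act_wedge p p' q a b (f : F q) : kz_homogeneous p a ->
  kz_act p (p' + q) a (kz_act p' q b f)
  = castF (esym (addnA p p' q)) (kz_act (p + p') q (kz_wedge a b) f).
Proof.
elim: p a => [|p IH] a ha.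
  by rewrite kz_wedge_deg0 // (is_linearZ (kz_act_linear_l _ _ _)) castF_id.
rewrite [in RHS](kz_ewedge_tail_sum (kz_homogeneous_set0 ha)) kz_wedge_suml.
under [in RHS]eq_bigr do rewrite kz_wedge_ewedgel.
rewrite (is_linear_sum (kz_act_linear_l _ _ _)).
under [in RHS]eq_bigr do rewrite kz_act_ewedge.
rewrite castF_sum /=; apply: eq_bigr => l _.
rewrite IH; last exact: kz_homogeneous_tail.
by rewrite (castF_natural (fun m => mu m (w l)) (esym (addnA p p' q))).
Qed.


Variable x : 'I_n -> R.
Variable d : forall i, F i.+1 -> F i.
Hypothesis d_linear : forall i, is_linear (d i).
Hypothesis d_mu0 : forall k (f : F 0%N), d 0%N (mu 0%N (w k) f) = x k *: f.
Hypothesis d_muS : forall j k (f : F j.+1),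
  d j.+1 (mu j.+1 (w k) f) = x k *: f - mu j (w k) (d j f).

Lemma kz_act_d i q a (f : F q) :
  kz_act i.+1 q (kz_d x a) f =
  \sum_l (x l *: kz_act i.+1 q (kz_tail l a) f
          - mu (i + q) (w l) (kz_act i q (kz_d x (kz_tail l a)) f)).
Proof.
rewrite /= sumrB.
under eq_bigr => m _ do rewrite kz_tail_d (is_linearB (kz_act_linear_l _ _ _))
   (is_linear_sum (kz_act_linear_l _ _ _)) (is_linearB (mu_linear_r _ _))
   (is_linear_sum (mu_linear_r _ _)).
rewrite sumrB; congr (_ - _).
rewrite exchange_big /=; apply: eq_bigr => l _.
rewrite scaler_sumr; apply: eq_bigr => m _.
by rewrite (is_linearZ (kz_act_linear_l _ _ _)) (is_linearZ (mu_linear_r _ _)).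
Qed.

Lemma kz_act_leibniz0 i a (f : F 0%N) :
  d (i + 0)%N (kz_act i.+1 0 a f) = kz_act i 0 (kz_d x a) f.
Proof.
elim: i a => [|i IH] a.
  rewrite /= (is_linear_sum (d_linear _)) kz_d_set0 scaler_suml.
  by apply: eq_bigr => l _; rewrite d_mu0 kz_tail_set0 scalerA.
rewrite kz_act_d [LHS]/= (is_linear_sum (d_linear _)); apply: eq_bigr => l _.
by rewrite d_muS IH.
Qed.

Lemma kz_act_leibniz i j a (f : F j.+1) :
  d (i + j.+1)%N (kz_act i.+1 j.+1 a f)
  = kz_act i j.+1 (kz_d x a) f
    + (-1) ^+ i.+1 *: castF (esym (addnS i j)) (kz_act i.+1 j a (d j f)).
Proof.
elim: i a => [|i IH] a.
  rewrite castF_id /= (is_linear_sum (d_linear _)) kz_d_set0 scaler_suml scaler_sumr.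
  rewrite -big_split; apply: eq_bigr => l _.
  rewrite d_muS kz_tail_set0 scalerA (is_linearZ (d_linear _)).
  by rewrite (is_linearZ (mu_linear_r _ _)) expr1 scaleN1r.
rewrite (kz_actS i.+1 j.+1) (kz_actS i.+1 j) kz_act_d (is_linear_sum (d_linear _)).
rewrite castF_sum scaler_sumr -big_split; apply: eq_bigr => l _.
rewrite d_muS IH (castF_natural (fun m => mu m (w l)) (esym (addnS i j))).
rewrite (is_linearD (mu_linear_r _ _)) (is_linearZ (mu_linear_r _ _)).
by rewrite (exprS _ i.+1) mulN1r scaleNr opprD addrA.
Qed.

End KoszulAction.

Arguments kz_act {R F} mu {n} w p q.

Lemma mem_ideal_gen (R : comPzRingType) n (x : 'I_n -> R) k : ideal_gen x (x k).
Proof.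
exists (fun i => (i == k)%:R); rewrite (bigD1 k) ?ltn_ord //= eqxx mul1r big1 ?addr0 //.
by move=> i /andP [_ /negbTE ->]; rewrite mul0r.
Qed.

Theorem proposition5p1 (R : comPzRingType) (I : R -> Prop)
    (F : nat -> lmodType R) (d : forall i, F i.+1 -> F i) (phi0 : F 0%N -> R)
    (mu : forall i, F 1%N -> F i -> F i.+1) :
  noetherian R ->
  is_ideal I ->
  free_resolution_of_quotient I d phi0 ->
  (forall i, is_bilinear (mu i)) ->
  (* (a) for i = 0 (d_0 = 0):  d_1(f_1 . f_0) = d_1(f_1) f_0 *)
  (forall (f1 : F 1%N) (f : F 0%N), d 0%N (mu 0%N f1 f) = phi0 (d 0%N f1) *: f) ->
  (* (a) for i = j+1:  d_(j+2)(f_1 . f) = d_1(f_1) f - f_1 . d_(j+1)(f) *)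
  (forall j (f1 : F 1%N) (f : F j.+1),
      d j.+1 (mu j.+1 f1 f) = phi0 (d 0%N f1) *: f - mu j f1 (d j f)) ->
  (* (b) *)
  (forall i (f1 : F 1%N) (f : F i), mu i.+1 f1 (mu i f1 f) = 0) ->
  forall (n : nat) (x : 'I_n -> R),
    regular_sequence x ->
    (forall r, ideal_gen x r -> I r) ->
    exists act : forall p q, koszul R n -> F q -> F (p + q)%N,
      DG_koszul_module x d act.
Proof.
move=> _ _ [_ d_lin _ _ I_im] mu_bil d_mu0 d_muS mu_nil n x _ x_in_I.
have /fin_all_exists [w dw] : forall k, exists w1 : F 1%N, phi0 (d 0%N w1) = x k.
  by move=> k; apply/I_im/x_in_I/mem_ideal_gen.
have d_mu0w k (f : F 0%N) : d 0%N (mu 0%N (w k) f) = x k *: f by rewrite d_mu0 dw.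
have d_muSw j k (f : F j.+1) : d j.+1 (mu j.+1 (w k) f) = x k *: f - mu j (w k) (d j f).
  by rewrite d_muS dw.
exists (kz_act mu w); split.
- split=> [p q|q f]; last by rewrite /= ffunE eqxx scale1r.
  by split=> [a|f]; [exact: kz_act_linear_r | exact: kz_act_linear_l].
- by move=> p p' q a b f ha _; exact: kz_act_wedge.
- by move=> j a f _; rewrite /= (is_linearZ (d_lin j)).
- by move=> i a f _; exact: kz_act_leibniz0.
- by move=> i j a f _; exact: kz_act_leibniz.
Qed.
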